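(* Let $L:\mathbb{R}^d\to\mathbb{R}^{\mathcal{Y}}_+$ be a polyhedral loss which indirectly elicits a finite property $\gamma:\Delta_{\mathcal{Y}}\rightrightarrows\mathcal{R}$. Then there exists $\epsilon_0>0$ such that for all $0<\epsilon\le\epsilon_0$, the general $\epsilon$-thickened link construction for $L,\gamma,\epsilon,\|\cdot\|_\infty$ produces a link that is separated (i.e., $\epsilon'$-separated for some $\epsilon'>0$) with respect to $\mathrm{prop}[L]$ and $\gamma$.
   Context: $\mathcal{Y}$ is a finite label set, $\Delta_{\mathcal{Y}}$ the simplex, $\mathbb{R}^{\mathcal{Y}}_+$ the nonnegative orthant. A property $\gamma:\Delta_{\mathcal{Y}}\rightrightarrows\mathcal{R}$ maps each $p$ to a nonempty subset of $\mathcal{R}$; finite if $\mathcal{R}$ finite; level sets $\gamma_r=\{p:r\in\gamma(p)\}$. $L:\mathbb{R}^d\to\mathbb{R}^{\mathcal{Y}}_+$ is polyhedral if each coordinate is a max of finitely many affine functions; it elicits $\Gamma=\mathrm{prop}[L]$, $\Gamma(p)=\arg\min_u\langle p,L(u)\rangle$. $L$ indirectly elicits $\gamma$ if for all $u$ there is $r$ with $\Gamma_u\subseteq\gamma_r$. General $\epsilon$-thickened link construction for $L,\gamma,\epsilon,\|\cdot\|$: let $\mathcal{U}=\{\Gamma(p):p\in\Delta_{\mathcal{Y}}\}$, $\Gamma_U=\{p:\Gamma(p)=U\}$, $R_U=\{r\in\mathcal{R}:\Gamma_U\subseteq\gamma_r\}$; initialize $\Psi(u)=\mathcal{R}$ for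 all $u$; for each $U\in\mathcal{U}$ and each $u$ with $\inf_{u^*\in U}\|u^*-u\|<\epsilon$ set $\Psi(u)\leftarrow\Psi(u)\cap R_U$; if $\Psi(u)\ne\emptyset$ for all $u$ the construction produces the links $\psi$ with $\psi(u)\in\Psi(u)$ for all $u$. A link $\psi:\mathbb{R}^d\to\mathcal{R}$ is $\epsilon'$-separated with respect to $\Gamma$ and $\gamma$ if $\psi(u)\notin\gamma(p)$ implies $\inf_{a\in\Gamma(p)}\|u-a\|_\infty\ge\epsilon'$. *)

From mathcomp Require Import all_boot all_order all_algebra.
From mathcomp Require Import reals.
Set Implicit Arguments. Unset Strict Implicit. Unset Printing Implicit Defensive.
Import Order.TTheory GRing.Theory Num.Theory.
Local Open Scope ring_scope.

Section Defs.
Variables (R : realType) (d : nat) (Y Rr : finType).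

Definition simplex (p : Y -> R) : Prop :=
  (forall y, 0 <= p y) /\ \sum_(y : Y) p y = 1.

Definition supnorm (v : 'rV[R]_d) : R := \big[Num.max/0]_(j < d) `|v 0 j|.

Definition affine (a : 'rV[R]_d) (b : R) (u : 'rV[R]_d) : R :=
  \sum_(j < d) a 0 j * u 0 j + b.

Definition polyhedral (L : 'rV[R]_d -> Y -> R) : Prop :=
  forall y, exists (n : nat) (a : 'I_n.+1 -> 'rV[R]_d) (b : 'I_n.+1 -> R),
    forall u, L u y = \big[Num.max/affine (a ord0) (b ord0) u]_(i < n.+1) affine (a i) (b i) u.

Definition nonneg_loss (L : 'rV[R]_d -> Y -> R) : Prop := forall u y, 0 <= L u y.

Definition exp_loss (L : 'rV[R]_d -> Y -> R) (p : Y -> R) (u : 'rV[R]_d) : R :=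
  \sum_(y : Y) p y * L u y.

(* u \in Gamma(p) = prop[L](p) = argmin_u <p, L(u)> *)
Definition propL (L : 'rV[R]_d -> Y -> R) (p : Y -> R) (u : 'rV[R]_d) : Prop :=
  forall u', exp_loss L p u <= exp_loss L p u'.

(* a property gamma : Delta_Y ⇉ Rr is given as a relation; "r \in gamma p" is gamma p r.
   It is a property: gamma(p) is nonempty for every p in the simplex. *)
Definition is_property (gamma : (Y -> R) -> Rr -> Prop) : Prop :=
  forall p, simplex p -> exists r, gamma p r.

Definition indirectly_elicits (L : 'rV[R]_d -> Y -> R) (gamma : (Y -> R) -> Rr -> Prop) : Prop :=
  forall u, exists r, forall p, simplex p -> propL L p u -> gamma p r.

(* R_U for U = Gamma(p0): r \in R_U iff Gamma_U ⊆ gamma_r, where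
   Gamma_U = {p \in simplex : Gamma(p) = U}. *)
Definition R_U (L : 'rV[R]_d -> Y -> R) (gamma : (Y -> R) -> Rr -> Prop) (p0 : Y -> R) (r : Rr) : Prop :=
  forall p, simplex p -> (forall v, propL L p v <-> propL L p0 v) -> gamma p r.

(* Psi(u) of the epsilon-thickened link construction (norm = sup norm):
   the intersection of R_U over all U \in {Gamma(p) : p \in simplex}
   with inf_{u* \in U} ||u* - u|| < eps (starting from all of Rr). *)
Definition Psi (L : 'rV[R]_d -> Y -> R) (gamma : (Y -> R) -> Rr -> Prop) (eps : R)
    (u : 'rV[R]_d) (r : Rr) : Prop :=
  forall p0, simplex p0 ->
    (exists ustar, propL L p0 ustar /\ supnorm (ustar - u) < eps) ->
    R_U L gamma p0 r.

Definition construction_produces (L : 'rV[R]_d -> Y -> R) (gamma : (Y -> R) -> Rr -> Prop) (eps : R) : Prop :=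
  forall u, exists r, Psi L gamma eps u r.

Definition produced_link (L : 'rV[R]_d -> Y -> R) (gamma : (Y -> R) -> Rr -> Prop) (eps : R)
    (psi : 'rV[R]_d -> Rr) : Prop :=
  forall u, Psi L gamma eps u (psi u).

Definition separated_link (L : 'rV[R]_d -> Y -> R) (gamma : (Y -> R) -> Rr -> Prop) (eps' : R)
    (psi : 'rV[R]_d -> Rr) : Prop :=
  forall u p, simplex p -> ~ gamma p (psi u) ->
    forall a, propL L p a -> eps' <= supnorm (u - a).

End Defs.

(* Each coordinate of L is the maximum of finitely many affine pieces.  If w
   minimises the expected loss for p and every piece active at w is also active
   at v, then v is a minimiser as well: moving from w to w + t (v' - v), no new
   piece becomes active for small t > 0, so the expected loss grows by at most
   t (E v' - E v).  Fourier-Motzkin elimination shows that a set of pieces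
   without a common active point misses one by a uniform margin; since pieces
   are Lipschitz and there are finitely many sets of pieces, for small eps all
   pieces active somewhere within eps of u are simultaneously active at a single
   point v.  Every distribution with a minimiser within eps of u then has v as a
   minimiser, so indirect elicitation at v yields a value of Psi(u); separation,
   with eps' = eps, is immediate from the definition of Psi. *)

From mathcomp Require Import all_boot all_order all_algebra.
From mathcomp Require Import reals boolp.
From mathcomp Require Import ring lra.
Set Implicit Arguments. Unset Strict Implicit. Unset Printing Implicit Defensive.
Import Order.TTheory GRing.Theory Num.Theory.
Local Open Scope ring_scope.

Section FourierMotzkin.
Variable R : realType.

(* The form [(c, c0)] stands for [v |-> \sum_(i < n) c i * v i + c0]; the
   dimension [n] is only supplied at evaluation, so that induction on [n] can
   eliminate the last coordinate. *)
Local Notation form := ((nat -> R) * R)%type.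

Definition eval_form n (g : form) (v : nat -> R) : R :=
  \sum_(i < n) g.1 i * v i + g.2.

Definition set_coord (v : nat -> R) n x : nat -> R :=
  fun i => if i == n then x else v i.

(* For [g.1 n > 0 > k.1 n] this is the convex combination of [g] and [k]
   whose [n]-th coefficient vanishes. *)
Definition fm_comb n (g k : form) : form :=
  ((fun i => (g.1 n * k.1 i - k.1 n * g.1 i) / (g.1 n - k.1 n)),
   (g.1 n * k.2 - k.1 n * g.2) / (g.1 n - k.1 n)).

Lemma eval_formS n g v : eval_form n.+1 g v = eval_form n g v + g.1 n * v n.
Proof. by rewrite /eval_form big_ord_recr /= addrAC. Qed.

Lemma eval_form_set_coord n g v x : eval_form n g (set_coord v n x) = eval_form n g v.
Proof.
congr (_ + _); apply: eq_bigr => i _.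
by rewrite /set_coord (ltn_eqF (ltn_ord i)).
Qed.

Lemma eval_fm_comb m n g k v : eval_form m (fm_comb n g k) v =
  (g.1 n * eval_form m k v - k.1 n * eval_form m g v) / (g.1 n - k.1 n).
Proof.
rewrite /eval_form /= mulrBl !mulrDr mulrBl !mulr_sumr -!mulrBl.
rewrite opprD addrACA -sumrB [RHS]mulrDl mulr_suml; congr (_ + _).
by apply: eq_bigr => i _; ring.
Qed.

Section Elimination.
Variables (I : finType) (P : pred I) (g : I -> form) (n : nat).

Definition fm_pred : pred (I + I * I) := fun ij =>
  match ij with
  | inl i => P i && ((g i).1 n == 0)
  | inr (i, j) => [&& P i, P j, 0 < (g i).1 n & (g j).1 n < 0]
  end.

Definition fm_elim (ij : I + I * I) : form :=
  match ij with
  | inl i => g i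
  | inr (i, j) => fm_comb n (g i) (g j)
  end.

Lemma fm_elim_coord ij : fm_pred ij -> (fm_elim ij).1 n = 0.
Proof.
case: ij => [i /andP[_ /eqP //]|[i j] _] /=.
by rewrite [_ * (g i).1 n]mulrC subrr mul0r.
Qed.

Lemma fm_elim_le ij v : fm_pred ij ->
  exists2 i, P i & eval_form n.+1 (fm_elim ij) v <= eval_form n.+1 (g i) v.
Proof.
case: ij => [i /andP[Pi _]|[i j] /and4P[Pi Pj gi gj]]; first by exists i.
have gap_gt0 : 0 < (g i).1 n - (g j).1 n by rewrite subr_gt0 (lt_trans gj).
rewrite /= eval_fm_comb.
set ei := eval_form _ (g i) v; set ej := eval_form _ (g j) v.
have [le_ji|lt_ij] := lerP ej ei.
  exists i; rewrite // ler_pdivrMr // -/ei.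
  have : 0 <= (g i).1 n * (ei - ej) by apply: mulr_ge0; lra.
  lra.
exists j; rewrite // ler_pdivrMr // -/ej.
have : 0 <= - (g j).1 n * (ej - ei) by apply: mulr_ge0; lra.
lra.
Qed.

Lemma fm_elim_extend v : (forall ij, fm_pred ij -> eval_form n (fm_elim ij) v <= 0) ->
  exists x, forall i, P i -> eval_form n.+1 (g i) (set_coord v n x) <= 0.
Proof.
move=> elim_le0.
pose lo i := eval_form n (g i) v / - (g i).1 n.
pose hi i := - eval_form n (g i) v / (g i).1 n.
have lo_hi i j : P i -> (g i).1 n < 0 -> P j -> 0 < (g j).1 n -> lo i <= hi j.
  move=> Pi gi Pj gj; have := elim_le0 (inr (j, i)); rewrite /= Pi Pj gi gj /=.
  rewrite eval_fm_comb ler_pdivrMr ?subr_gt0 ?(lt_trans gi) // mul0r => /(_ isT).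
  rewrite /lo /hi ler_pdivrMr ?oppr_gt0 // mulrAC ler_pdivlMr //; nra.
pose m := \big[Num.min/0]_(j | P j && (0 < (g j).1 n)) hi j.
pose x := \big[Num.max/m]_(i | P i && ((g i).1 n < 0)) lo i.
exists x => i Pi; rewrite eval_formS eval_form_set_coord /set_coord eqxx.
case: (ltrgtP ((g i).1 n) 0) => [gi|gi|gi].
- have : lo i <= x by apply: le_bigmax_cond; rewrite Pi gi.
  rewrite /lo ler_pdivrMr ?oppr_gt0 //; lra.
- have : x <= hi i.
    apply: bigmax_le => [|j /andP[Pj gj]]; last exact: lo_hi.
    by apply: bigmin_le_cond; rewrite Pi gi.
  rewrite /hi ler_pdivlMr //; lra.
- by rewrite gi mul0r addr0; apply: (elim_le0 (inl i)); rewrite /= Pi gi eqxx.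
Qed.

End Elimination.

Lemma max_form_gt0_uniform n (I : finType) (P : pred I) (g : I -> form) :
  (forall v, exists2 i, P i & 0 < eval_form n (g i) v) ->
  exists2 delta, 0 < delta & forall v, exists2 i, P i & delta <= eval_form n (g i) v.
Proof.
elim: n I P g => [|n IH] I P g pos.
  have [i Pi gi] := pos (fun=> 0); exists (eval_form 0 (g i) (fun=> 0)) => // v.
  by exists i; rewrite // /eval_form !big_ord0.
have [v|delta delta_gt0 gap] := IH _ (fm_pred P g n) (fm_elim g n).
  apply: contrapT => no_pos.
  have elim_le0 ij : fm_pred P g n ij -> eval_form n (fm_elim g n ij) v <= 0.
    by move=> Pij; rewrite leNgt; apply/negP => ?; apply: no_pos; exists ij.
  have [x le0] := fm_elim_extend elim_le0.
  have [i Pi] := pos (set_coord v n x); by rewrite ltNge le0.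
exists delta => // v; have [ij Pij le_delta] := gap v.
have [i Pi le_gi] := fm_elim_le v Pij; exists i => //.
by apply: le_trans le_gi; rewrite eval_formS (fm_elim_coord Pij) mul0r addr0.
Qed.

End FourierMotzkin.

Section AffineRows.
Variables (R : realType) (d : nat).
Implicit Types (a u v w : 'rV[R]_d) (b : R).

Lemma affineB a a' b b' u : affine (a - a') (b - b') u = affine a b u - affine a' b' u.
Proof.
rewrite /affine opprD addrACA -sumrB; congr (_ + _).
by apply: eq_bigr => j _; rewrite !mxE mulrBl.
Qed.

Lemma affine_shift a b w t h : affine a b (w + t *: h) = affine a b w + t * affine a 0 h.
Proof.
rewrite /affine addr0 mulr_sumr addrAC -big_split /=; congr (_ + _).
by apply: eq_bigr => j _; rewrite !mxE; ring.
Qed.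

Lemma affine0_diff a b v v' : affine a 0 (v' - v) = affine a b v' - affine a b v.
Proof.
rewrite /affine opprD addrACA subrr !addr0 -sumrB.
by apply: eq_bigr => j _; rewrite !mxE mulrBr.
Qed.

Lemma supnorm_ge v j : `|v 0 j| <= supnorm v.
Proof. by rewrite /supnorm (bigD1 j) //= le_max lexx. Qed.

Lemma supnorm_ge0 v : 0 <= supnorm v.
Proof. exact: bigmax_ge_id. Qed.

Lemma supnormC u w : supnorm (u - w) = supnorm (w - u).
Proof. by rewrite -opprB /supnorm; apply: eq_bigr => j _; rewrite mxE normrN. Qed.

Lemma affine_lipschitz a b u w :
  `|affine a b u - affine a b w| <= (\sum_(j < d) `|a 0 j|) * supnorm (u - w).
Proof.
rewrite /affine opprD addrACA subrr addr0 -sumrB mulr_suml.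
apply: le_trans (ler_norm_sum _ _ _) _; apply: ler_sum => j _.
by rewrite -mulrBr normrM ler_wpM2l //; have := supnorm_ge (u - w) j; rewrite !mxE.
Qed.

Definition coords v : nat -> R := fun i => oapp (fun j : 'I_d => v 0 j) 0 (insub i).

Lemma row_coords v : \row_(j < d) coords v j = v.
Proof. by apply/rowP => j; rewrite mxE /coords valK. Qed.

Lemma eval_form_coords a b (x : nat -> R) : eval_form d (coords a, b) x = affine a b (\row_j x j).
Proof. by congr (_ + _); apply: eq_bigr => j _; rewrite /coords /= valK mxE. Qed.

Lemma max_affine_gt0_uniform (I : finType) (P : pred I) (a : I -> 'rV[R]_d) (b : I -> R) :
  (forall u, exists2 i, P i & 0 < affine (a i) (b i) u) ->
  exists2 delta, 0 < delta & forall u, exists2 i, P i & delta <= affine (a i) (b i) u.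
Proof.
move=> pos; have [x|delta delta_gt0 gap] := @max_form_gt0_uniform _ d _ P (fun i => (coords (a i), b i)).
  by have [i Pi] := pos (\row_j x j); exists i; rewrite ?eval_form_coords.
exists delta => // u; have [i Pi] := gap (coords u).
by rewrite eval_form_coords row_coords; exists i.
Qed.

End AffineRows.

Section NearZero.
Variable R : realType.

Lemma near0_addr_gt0 (c s : R) : 0 < c ->
  exists2 e, 0 < e & forall x, 0 < x <= e -> 0 < c + x * s.
Proof.
move=> c_gt0; have s1_gt0 : 0 < `|s| + 1 by rewrite ltr_wpDl.
exists (c / (`|s| + 1)) => [|x /andP[x_gt0]]; first exact: divr_gt0.
rewrite ler_pdivlMr // => xs_le.
have : - (x * s) <= x * `|s| by rewrite -mulrN ler_pM2l // ler_normr lexx orbT.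
lra.
Qed.

Lemma near0_forall_fin (T : finType) (P : T -> R -> Prop) :
  (forall t, exists2 e, 0 < e & forall x, 0 < x <= e -> P t x) ->
  exists2 e, 0 < e & forall t x, 0 < x <= e -> P t x.
Proof.
move=> near.
have /choice [e e_near] : forall t, exists e, 0 < e /\ forall x, 0 < x <= e -> P t x.
  by move=> t; have [e ? ?] := near t; exists e.
exists (\big[Num.min/1]_t e t) => [|t x /andP[x_gt0 x_le]].
  by apply: lt_bigmin => // t _; case: (e_near t).
apply: (e_near t).2; rewrite x_gt0 (le_trans x_le) //; exact: bigmin_le.
Qed.

End NearZero.

Section Pieces.
Variables (R : realType) (d : nat) (Y : finType) (L : 'rV[R]_d -> Y -> R).
Variables (K : finType) (tg : K -> Y) (A : K -> 'rV[R]_d) (B : K -> R).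
Local Notation ell k := (affine (A k) (B k)).
Hypothesis piece_le : forall k u, ell k u <= L u (tg k).
Hypothesis piece_max : forall y u, exists2 k, tg k = y & ell k u = L u y.

Definition active k u : bool := ell k u == L u (tg k).

Lemma active_near w h : exists2 t, 0 < t & forall k, active k (w + t *: h) -> active k w.
Proof.
pose P (jk : K * K) t := active jk.2 w -> tg jk.1 = tg jk.2 -> ~~ active jk.1 w ->
  ell jk.1 (w + t *: h) < ell jk.2 (w + t *: h).
have [[j k]|t t_gt0 strict] := @near0_forall_fin _ _ P.
  rewrite /P /=; case: (boolP (active k w)) => [/eqP Lk|_]; last by exists 1.
  case: (boolP (active j w)) => [_|Nj]; first by exists 1.
  case: (eqVneq (tg j) (tg k)) => [tjk|neq]; last by exists 1 => // x _ _ tjk; rewrite tjk eqxx in neq.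
  have gap : 0 < ell k w - ell j w.
    by rewrite subr_gt0 Lk -tjk lt_neqAle piece_le andbT.
  have [e e_gt0 pos] := near0_addr_gt0 (affine (A k) 0 h - affine (A j) 0 h) gap.
  exists e => // x xe _ _ _; rewrite -subr_gt0 !affine_shift.
  have := pos x xe; lra.
exists t => // k; apply: contraLR => Nk.
have [k0 tk0 Lk0] := piece_max (tg k) w.
have lt : ell k (w + t *: h) < ell k0 (w + t *: h).
  by apply: (strict (k, k0)); rewrite /= ?t_gt0 ?lexx // /active tk0 Lk0.
have := piece_le k0 (w + t *: h); rewrite /active tk0 => le.
by rewrite lt_eqF // (lt_le_trans lt le).
Qed.

Lemma loss_chord_le w v v' t y : 0 <= t ->
  (forall k, active k w -> active k v) ->
  (forall k, active k (w + t *: (v' - v)) -> active k w) ->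
  L (w + t *: (v' - v)) y - L w y <= t * (L v' y - L v y).
Proof.
move=> t_ge0 wv near; have [k tk Lk] := piece_max y (w + t *: (v' - v)).
have act_w : active k w by apply: near; rewrite /active tk Lk.
move: (act_w) (wv k act_w); rewrite /active tk => /eqP <- /eqP <-.
rewrite -Lk affine_shift (affine0_diff _ (B k)) addrAC subrr add0r.
by rewrite ler_wpM2l // lerD2r -tk.
Qed.

Lemma argmin_transfer p w v : simplex p -> propL L p w ->
  (forall k, active k w -> active k v) -> propL L p v.
Proof.
move=> [p_ge0 _] w_min wv v'; have [t t_gt0 near] := active_near w (v' - v).
have chord : exp_loss L p (w + t *: (v' - v)) - exp_loss L p w <=
             t * (exp_loss L p v' - exp_loss L p v).
  rewrite /exp_loss -!sumrB mulr_sumr; apply: ler_sum => y _.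
  rewrite -!mulrBr mulrCA ler_wpM2l //; exact: loss_chord_le (ltW t_gt0) wv near.
rewrite -subr_ge0 -(pmulr_rge0 _ t_gt0); apply: le_trans chord.
by rewrite subr_ge0 w_min.
Qed.

Definition coactive (S : {set K}) : Prop := exists v, forall k, k \in S -> active k v.

Definition near_active eps u : {set K} :=
  [set k | `[< exists2 w, supnorm (w - u) < eps & active k w >]].

Lemma coactive_gap : exists2 delta, 0 < delta & forall S, ~ coactive S ->
  forall u, exists k j, [/\ k \in S, tg j = tg k & delta <= ell j u - ell k u].
Proof.
have [S|delta delta_gt0 gap] := @near0_forall_fin _ _ (fun S delta => ~ coactive S ->
    forall u, exists k j, [/\ k \in S, tg j = tg k & delta <= ell j u - ell k u]).
  have [coS|NcoS] := pselect (coactive S); first by exists 1.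
  pose P (kj : K * K) := (kj.1 \in S) && (tg kj.2 == tg kj.1).
  have [u|delta delta_gt0 gap] :=
    max_affine_gt0_uniform (P := P) (a := fun kj => A kj.2 - A kj.1) (b := fun kj => B kj.2 - B kj.1).
    have [/forall_inP act|/forall_inPn [k kS Nk]] := boolP [forall k in S, active k u].
      by case: NcoS; exists u.
    have [j tj Lj] := piece_max (tg k) u.
    exists (k, j); first by rewrite /P /= kS tj eqxx.
    by rewrite affineB subr_gt0 Lj lt_neqAle piece_le andbT.
  exists delta => // x /andP[_ x_le] _ u; have [[k j] /andP[/= kS /eqP tj]] := gap u.
  by rewrite affineB => le; exists k, j; split=> //; apply: le_trans le.
by exists delta => // S NcoS; apply: gap; rewrite ?delta_gt0 ?lexx.
Qed.

Lemma near_active_coactive :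
  exists2 eps0, 0 < eps0 & forall eps u, eps <= eps0 -> coactive (near_active eps u).
Proof.
have [delta delta_gt0 gap] := coactive_gap.
pose M := \sum_k \sum_(j < d) `|A k 0 j|.
have le_M k : \sum_(j < d) `|A k 0 j| <= M.
  by rewrite /M (bigD1 k) //= lerDl; apply: sumr_ge0 => *; apply: sumr_ge0.
have M_ge0 : 0 <= M by apply: sumr_ge0 => *; apply: sumr_ge0.
have M1_gt0 : 0 < 2 * M + 1 by lra.
exists (delta / (2 * M + 1)) => [|eps u eps_le]; first exact: divr_gt0.
apply: contrapT => /gap /(_ u) [k [j [+ tj gap_u]]].
rewrite inE => /asboolP [w wu /eqP act_w].
have lip i : `|ell i u - ell i w| <= M * eps.
  apply: le_trans (affine_lipschitz _ _ u w) _.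
  by apply: ler_pM; rewrite ?sumr_ge0 ?supnorm_ge0 ?le_M // supnormC ltW.
have Mdelta : M * eps * (2 * M + 1) <= M * delta.
  by rewrite -mulrA ler_wpM2l // -ler_pdivlMr.
(* [ell j u - ell k u <= (ell j w - ell k w) + 2 M eps <= 2 M eps < delta] *)
have := lip j; have := lip k; rewrite !ler_norml.
have := piece_le j w; rewrite tj -act_w; nra.
Qed.

Lemma construction_produces_of_coactive (Rr : finType) (gamma : (Y -> R) -> Rr -> Prop) eps :
  indirectly_elicits L gamma -> (forall u, coactive (near_active eps u)) ->
  construction_produces L gamma eps.
Proof.
move=> elicits coact u; have [v act_v] := coact u; have [r gamma_r] := elicits v.
exists r => p0 _ [us [us_min us_u]] p p_simplex same_argmin.
apply: gamma_r => //; apply: (argmin_transfer p_simplex (w := us)); first exact/same_argmin.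
by move=> k act_us; apply: act_v; rewrite inE; apply/asboolP; exists us.
Qed.

End Pieces.

Lemma produced_link_separated (R : realType) (d : nat) (Y Rr : finType)
    (L : 'rV[R]_d -> Y -> R) (gamma : (Y -> R) -> Rr -> Prop) eps psi :
  produced_link L gamma eps psi -> separated_link L gamma eps psi.
Proof.
move=> link u p p_simplex not_gamma a a_min; rewrite leNgt; apply/negP => a_near.
apply: not_gamma; apply: (link u p p_simplex _ p p_simplex) => //.
by exists a; rewrite supnormC.
Qed.

Lemma bigmax_attained disp (T : orderType disp) n (F : 'I_n.+1 -> T) :
  exists i, \big[Order.max/F ord0]_(j < n.+1) F j = F i.
Proof.
apply: (big_ind (fun x => exists i, x = F i)); first by exists ord0.
  by move=> x y [i ->] [j ->]; rewrite maxEle; case: ifP; [exists j | exists i].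
by move=> i _; exists i.
Qed.

Lemma polyhedral_pieces (R : realType) (d : nat) (Y : finType) (L : 'rV[R]_d -> Y -> R) :
  polyhedral L -> exists (K : finType) (tg : K -> Y) (A : K -> 'rV[R]_d) (B : K -> R),
    (forall k u, affine (A k) (B k) u <= L u (tg k)) /\
    (forall y u, exists2 k, tg k = y & affine (A k) (B k) u = L u y).
Proof.
move=> poly.
have /choice [T LT] : forall y, exists t : {n : nat & ('I_n.+1 -> 'rV[R]_d) * ('I_n.+1 -> R)},
    forall u, L u y = \big[Num.max/affine ((tagged t).1 ord0) ((tagged t).2 ord0) u]_(i < (tag t).+1)
                        affine ((tagged t).1 i) ((tagged t).2 i) u.
  by move=> y; have [n [a [b Ly]]] := poly y; exists (existT _ n (a, b)).
pose piece y u i := affine ((tagged (T y)).1 i) ((tagged (T y)).2 i) u.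
exists {y : Y & 'I_(tag (T y)).+1}, (fun k => tag k),
  (fun k => (tagged (T (tag k))).1 (tagged k)), (fun k => (tagged (T (tag k))).2 (tagged k)).
split=> [[y i] u | y u] /=; first by rewrite (LT y u); apply: le_bigmax.
have [i max_i] := bigmax_attained (piece y u).
by exists (Tagged (fun y => 'I_(tag (T y)).+1) i); rewrite //= (LT y u) max_i.
Qed.

Theorem proposition7 (R : realType) (d : nat) (Y Rr : finType)
    (L : 'rV[R]_d -> Y -> R) (gamma : (Y -> R) -> Rr -> Prop) :
  polyhedral L -> nonneg_loss L -> is_property gamma -> indirectly_elicits L gamma ->
  exists eps0 : R, 0 < eps0 /\
    forall eps : R, 0 < eps -> eps <= eps0 ->
      construction_produces L gamma eps /\
      forall psi : 'rV[R]_d -> Rr, produced_link L gamma eps psi ->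
        exists eps' : R, 0 < eps' /\ separated_link L gamma eps' psi.
Proof.
move=> /polyhedral_pieces [K [tg [A [B [piece_le piece_max]]]]] _ _ elicits.
have [eps0 eps0_gt0 coact] := near_active_coactive piece_le piece_max.
exists eps0; split=> // eps eps_gt0 eps_le; split.
  by apply: (construction_produces_of_coactive piece_le piece_max) => // u; apply: coact.
by move=> psi link; exists eps; split=> //; apply: produced_link_separated.
Qed.
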